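(* Let $\beta>0$ and let $p,d$ be nonnegative integers. Then $\Phi_\beta(p,d)=\Phi_\beta(p,0)^{d+1}$, and $\Phi_\beta(p,0)$ is the smallest positive root of the equation $$y^{p+1}-(\beta+1)y+\beta=0.$$ In particular, if $\beta\ge p$, then $\Phi_\beta(p,d)=1$ for all integers $d\ge 0$, i.e. $W_\beta$ crosses the line $y=px+d$ almost surely.
   Context: For $\beta>0$, the $\beta$-biased monotonic random walk $W_\beta$ is the random walk on $\mathbb{Z}^2$ starting at the origin $(0,0)$ which, independently at each step, moves from $(a,b)$ to $(a+1,b)$ with probability $1/(\beta+1)$ and to $(a,b+1)$ with probability $\beta/(\beta+1)$. For nonnegative integers $p,d$, $\Phi_\beta(p,d)$ denotes the probability that $W_\beta$ crosses the line $y=px+d$, i.e. the probability that $W_\beta$ visits at least one of the lattice points $(n,pn+d+1)$, $n\ge 0$. *)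

From Stdlib Require Import Reals Arith List.
Import ListNotations.
Open Scope R_scope.

(* A step of the walk: [false] = move (a,b) -> (a+1,b)   (prob 1/(beta+1)),
                       [true]  = move (a,b) -> (a,b+1)   (prob beta/(beta+1)). *)
Definition step_prob (beta : R) (s : bool) : R :=
  if s then beta / (beta + 1) else 1 / (beta + 1).

Fixpoint path_weight (beta : R) (w : list bool) : R :=
  match w with
  | [] => 1
  | s :: r => step_prob beta s * path_weight beta r
  end.

Fixpoint all_paths (N : nat) : list (list bool) :=
  match N with
  | O => [[]]
  | S n => map (cons false) (all_paths n) ++ map (cons true) (all_paths n)
  end.

(* Starting at lattice point (a,b), does the walk following [w] visit a
   point of the form (n, p*n + d + 1)?  (The current point (a,b) itself is
   not tested; at the origin it never has this form.) *)
Fixpoint hits (p d : nat) (a b : nat) (w : list bool) : bool :=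
  match w with
  | [] => false
  | s :: r =>
      let a' := if s then a else S a in
      let b' := if s then S b else b in
      Nat.eqb b' (p * a' + d + 1)%nat || hits p d a' b' r
  end.

Definition PhiN (beta : R) (p d : nat) (N : nat) : R :=
  fold_right Rplus 0
    (map (fun w => if hits p d 0 0 w then path_weight beta w else 0)
         (all_paths N)).

(* Phi_beta(p,d) = x : the probability of the (increasing union) event
   "W_beta visits some (n, p n + d + 1)" equals x, i.e. by continuity of
   probability, the finite-horizon probabilities converge to x. *)
Definition Phi_is (beta : R) (p d : nat) (x : R) : Prop :=
  Un_cv (PhiN beta p d) x.

Definition smallest_pos_root (beta : R) (p : nat) (y : R) : Prop :=
  0 < y /\ y ^ (p + 1) - (beta + 1) * y + beta = 0 /\
  forall z, 0 < z -> z ^ (p + 1) - (beta + 1) * z + beta = 0 -> y <= z.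

(* Measure the position (a,b) of the walk by its gap  g = p a + d + 1 - b  to
   the line: an up step (probability a := beta/(beta+1)) lowers g by one, a
   right step (probability c := 1/(beta+1)) raises it by p, and the walk
   crosses the line exactly when g first reaches 0.  Hence, writing
   [reach N k] for the probability of reaching gap 0 from gap k within N
   steps, PhiN beta p d N = reach N (d+1).

   When
   a + c = 1 the limits R_k therefore exist and satisfy R_k = R_1^k, and R_1
   is the least nonnegative fixed point. *)
From Stdlib Require Import Reals Arith List Lia Lra.
Import ListNotations.
Open Scope R_scope.

Section Reach.
Variables (a c : R) (p : nat).
Hypothesis Ha : 0 <= a.
Hypothesis Hc : 0 <= c.

(* [reach N k]: probability that the walk on gaps with steps -1 (weight a)
   and +p (weight c), started at gap k, visits gap 0 within N steps. *)
Fixpoint reach (N k : nat) {struct N} : R :=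
  match N, k with
  | _, O => 1
  | O, S _ => 0
  | S N', S k' => a * reach N' k' + c * reach N' (S k' + p)
  end.

Lemma reach_gap0 N : reach N 0 = 1.
Proof. destruct N; reflexivity. Qed.

Lemma reach_nonneg N : forall k, 0 <= reach N k.
Proof.
  induction N as [|N IH]; intros [|k]; simpl; try lra.
  pose proof (IH k); pose proof (IH (S (k + p))).
  apply Rplus_le_le_0_compat; apply Rmult_le_pos; assumption.
Qed.

Lemma reach_le_fixpoint_pow z : 0 <= z -> z = a + c * z ^ S p ->
  forall N k, reach N k <= z ^ k.
Proof.
  intros Hz Hfix. induction N as [|N IH]; intros [|k]; simpl; try lra.
  - apply Rmult_le_pos; [assumption | apply pow_le; assumption].
  - pose proof (IH k); pose proof (IH (S (k + p))).
    assert (Hsplit : z ^ S (k + p) = z ^ k * z ^ S p).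
    { rewrite <- pow_add. f_equal. lia. }
    apply Rle_trans with (a * z ^ k + c * z ^ S (k + p)).
    + apply Rplus_le_compat; apply Rmult_le_compat_l; assumption.
    + rewrite Hsplit. right.
      transitivity (z ^ k * (a + c * z ^ S p)); [ring|].
      rewrite <- Hfix. ring.
Qed.

Lemma reach_step_mono N : forall k, reach N k <= reach (S N) k.
Proof.
  induction N as [|N IH]; intros [|k]; try (simpl; lra).
  - apply reach_nonneg.
  - change (a * reach N k + c * reach N (S k + p)
            <= a * reach (S N) k + c * reach (S N) (S k + p)).
    apply Rplus_le_compat; apply Rmult_le_compat_l; auto.
Qed.

Lemma reach_mono N M k : reach N k <= reach (M + N) k.
Proof.
  induction M as [|M IH]; simpl; [lra|].
  eapply Rle_trans; [apply IH | apply reach_step_mono].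
Qed.

(* Descending k levels within N steps and then j more within M steps is one
   way of descending k+j levels within N+M steps. *)
Lemma reach_supermult N : forall M k j,
  reach N k * reach M j <= reach (N + M) (k + j).
Proof.
  induction N as [|N IH]; intros M [|k] j.
  - simpl; lra.
  - simpl. rewrite Rmult_0_l. apply reach_nonneg.
  - rewrite reach_gap0, Rmult_1_l. apply reach_mono.
  - change (reach (S N) (S k)) with (a * reach N k + c * reach N (S k + p)).
    change (reach (S N + M) (S k + j))
      with (a * reach (N + M) (k + j) + c * reach (N + M) (S (k + j) + p)).
    replace (S (k + j) + p)%nat with (S k + p + j)%nat by lia.
    pose proof (IH M k j); pose proof (IH M (S k + p)%nat j).
    rewrite Rmult_plus_distr_r, !Rmult_assoc.
    apply Rplus_le_compat; apply Rmult_le_compat_l; assumption.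
Qed.

Lemma reach_submult (L : R) j : (forall n, reach n j <= L) ->
  forall N k, reach N (k + j) <= reach N k * L.
Proof.
  intros HL. induction N as [|N IH]; intros [|k].
  - rewrite reach_gap0, Rmult_1_l. apply HL.
  - simpl. lra.
  - rewrite reach_gap0, Rmult_1_l. apply HL.
  - change (reach (S N) (S k + j))
      with (a * reach N (k + j) + c * reach N (S (k + j) + p)).
    change (reach (S N) (S k)) with (a * reach N k + c * reach N (S k + p)).
    replace (S (k + j) + p)%nat with (S k + p + j)%nat by lia.
    pose proof (IH k); pose proof (IH (S k + p)%nat).
    rewrite Rmult_plus_distr_r, !Rmult_assoc.
    apply Rplus_le_compat; apply Rmult_le_compat_l; assumption.
Qed.

End Reach.

Lemma cv_const (x : R) : Un_cv (fun _ => x) x.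
Proof.
  intros e He. exists 0%nat. intros n _.
  unfold Rdist. rewrite Rminus_diag, Rabs_R0. exact He.
Qed.

Lemma cv_le_const u l M : Un_cv u l -> (forall n, u n <= M) -> l <= M.
Proof. intros Hu HM. exact (Rle_cv_lim HM Hu (cv_const M)). Qed.

Section ReachLimit.
Variables (a c : R) (p : nat).
Hypothesis Ha : 0 <= a.
Hypothesis Hc : 0 <= c.
Hypothesis Hac : a + c = 1.

(* With a + c = 1, the fixed point z = 1 bounds every [reach N k] by 1. *)
Lemma reach_bounded k : has_ub (fun n => reach a c p n k).
Proof.
  exists 1. intros x [n ->]. rewrite <- (pow1 k).
  apply reach_le_fixpoint_pow; try lra. rewrite pow1; lra.
Qed.

Lemma reach_growing k : Un_growing (fun n => reach a c p n k).
Proof. intro n. apply reach_step_mono; assumption. Qed.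

Let reach_lim (k : nat) : R :=
  proj1_sig (growing_cv _ (reach_growing k) (reach_bounded k)).

Let reach_lim_cv k : Un_cv (fun n => reach a c p n k) (reach_lim k).
Proof. unfold reach_lim. destruct growing_cv; assumption. Qed.

Let reach_le_lim n k : reach a c p n k <= reach_lim k.
Proof. apply (growing_ineq (fun n => reach a c p n k)); auto using reach_growing. Qed.

(* Multiplicativity R_(k+j) = R_k R_j: the two bounds of Section Reach
   pass to the limit. *)
Let reach_lim_mult k j : reach_lim (k + j) = reach_lim k * reach_lim j.
Proof.
  apply Rle_antisym.
  - apply (@Rle_cv_lim (fun n => reach a c p n (k + j))
                       (fun n => reach a c p n k * reach_lim j)).
    + intro n. apply reach_submult; auto.
    + apply reach_lim_cv.
    + apply CV_mult; [apply reach_lim_cv | apply cv_const].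
  - apply (cv_le_const (fun n => reach a c p n k * reach a c p n j)).
    + apply CV_mult; apply reach_lim_cv.
    + intro n. eapply Rle_trans; [apply reach_supermult; assumption|].
      apply reach_le_lim.
Qed.

Let reach_lim_pow k : reach_lim k = reach_lim 1 ^ k.
Proof.
  induction k as [|k IH].
  - apply (UL_sequence (fun n => reach a c p n 0)); [apply reach_lim_cv|].
    simpl. eapply Un_cv_ext; [|apply cv_const]. intro n. symmetry. apply reach_gap0.
  - replace (S k) with (k + 1)%nat by lia.
    rewrite reach_lim_mult, IH, pow_add, pow_1. reflexivity.
Qed.

Lemma reach_limit_spec : 0 < a -> exists l : R,
  0 < l /\
  (forall k, Un_cv (fun n => reach a c p n k) (l ^ k)) /\
  l = a + c * l ^ S p /\
  (forall z, 0 <= z -> z = a + c * z ^ S p -> l <= z).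
Proof.
  intros Hapos. exists (reach_lim 1).
  assert (Hcv : forall k, Un_cv (fun n => reach a c p n k) (reach_lim 1 ^ k)).
  { intro k. rewrite <- reach_lim_pow. apply reach_lim_cv. }
  split; [|split; [exact Hcv | split]].
  - apply Rlt_le_trans with (reach a c p 1 1); [|apply reach_le_lim].
    simpl. pose proof (reach_nonneg a c p Ha Hc 0 (S p)). nra.
  - apply (UL_sequence (fun n => reach a c p (n + 1) 1)).
    + apply (CV_shift' (fun n => reach a c p n 1) 1). apply reach_lim_cv.
    + eapply Un_cv_ext.
      2:{ apply CV_plus; [apply cv_const|].
          apply CV_mult; [apply cv_const | apply (Hcv (S p))]. }
      intro n. rewrite Nat.add_1_r. simpl. rewrite reach_gap0. ring.
  - intros z Hz Hfix. rewrite <- (pow_1 (reach_lim 1)).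
    apply (cv_le_const _ _ _ (Hcv 1%nat)).
    intro n. rewrite <- (pow_1 z).
    apply reach_le_fixpoint_pow; assumption.
Qed.

End ReachLimit.

Definition sumf (f : list bool -> R) (l : list (list bool)) : R :=
  fold_right Rplus 0 (map f l).

Lemma sumf_app f l1 l2 : sumf f (l1 ++ l2) = sumf f l1 + sumf f l2.
Proof. unfold sumf. induction l1 as [|x l1 IH]; simpl; [ring | rewrite IH; ring]. Qed.

Lemma sumf_map f g l : sumf f (map g l) = sumf (fun x => f (g x)) l.
Proof. unfold sumf. rewrite map_map. reflexivity. Qed.

Lemma sumf_ext f g l : (forall x, f x = g x) -> sumf f l = sumf g l.
Proof. intros H. unfold sumf. f_equal. apply map_ext. exact H. Qed.

Lemma sumf_scale k f l : sumf (fun x => k * f x) l = k * sumf f l.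
Proof. unfold sumf. induction l as [|x l IH]; simpl; [ring | rewrite IH; ring]. Qed.

Lemma sumf_all_paths_S f N :
  sumf f (all_paths (S N)) =
  sumf (fun w => f (false :: w)) (all_paths N) +
  sumf (fun w => f (true :: w)) (all_paths N).
Proof. simpl all_paths. rewrite sumf_app, !sumf_map. reflexivity. Qed.

Lemma total_weight beta : 0 < beta -> forall N,
  sumf (path_weight beta) (all_paths N) = 1.
Proof.
  intros Hb N. induction N as [|N IH]; [unfold sumf; simpl; ring|].
  rewrite sumf_all_paths_S. simpl path_weight.
  rewrite !sumf_scale, IH. unfold step_prob. field. lra.
Qed.

Section Bridge.
Variables (beta : R) (p d : nat).
Hypothesis Hb : 0 < beta.

Let cross_from N x y : R :=
  sumf (fun w => if hits p d x y w then path_weight beta w else 0) (all_paths N).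

Let cross_step (s : bool) (x y x' y' N : nat) :
  x' = (if s then x else S x) -> y' = (if s then S y else y) ->
  (y' =? p * x' + d + 1)%nat = false ->
  sumf (fun w => if hits p d x y (s :: w) then path_weight beta (s :: w) else 0)
       (all_paths N)
  = step_prob beta s * cross_from N x' y'.
Proof.
  intros -> -> Hmiss. unfold cross_from. rewrite <- sumf_scale.
  apply sumf_ext. intro w. cbn [hits path_weight]. rewrite Hmiss.
  destruct hits; simpl; ring.
Qed.

Let cross_from_reach N : forall x y k, (p * x + d = y + k)%nat ->
  cross_from N x y = reach (step_prob beta true) (step_prob beta false) p N (S k).
Proof.
  induction N as [|N IH]; intros x y k Hk; [unfold cross_from, sumf; simpl; ring|].
  unfold cross_from. rewrite sumf_all_paths_S.
  rewrite (cross_step false x y (S x) y) by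
      (reflexivity || (apply Nat.eqb_neq; rewrite Nat.mul_succ_r; lia)).
  rewrite (IH (S x) y (k + p)%nat) by (rewrite Nat.mul_succ_r; lia).
  change (reach _ _ p (S N) (S k)) with
    (step_prob beta true * reach (step_prob beta true) (step_prob beta false) p N k
     + step_prob beta false
       * reach (step_prob beta true) (step_prob beta false) p N (S (k + p))).
  destruct k as [|k].
  - (* the up step lands on the line *)
    assert (Hhit : forall w, hits p d x y (true :: w) = true).
    { intro w. change ((S y =? p * x + d + 1) || hits p d x (S y) w = true)%bool.
      replace (S y =? p * x + d + 1) with true by (symmetry; apply Nat.eqb_eq; lia).
      reflexivity. }
    rewrite (sumf_ext _ (fun w => step_prob beta true * path_weight beta w))
      by (intro w; rewrite Hhit; reflexivity).
    rewrite sumf_scale, total_weight, reach_gap0 by assumption. ring.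
  - rewrite (cross_step true x y x (S y)) by
        (reflexivity || (apply Nat.eqb_neq; lia)).
    rewrite (IH x (S y) k) by lia. ring.
Qed.

Lemma PhiN_reach N :
  PhiN beta p d N = reach (step_prob beta true) (step_prob beta false) p N (S d).
Proof. apply (cross_from_reach N 0 0 d). lia. Qed.

End Bridge.

Lemma fixpoint_iff_root beta p z : 0 < beta ->
  z = step_prob beta true + step_prob beta false * z ^ S p <->
  z ^ (p + 1) - (beta + 1) * z + beta = 0.
Proof.
  intros Hb. rewrite Nat.add_1_r. unfold step_prob.
  assert (Hne : beta + 1 <> 0) by lra.
  split; intros H.
  - apply (Rmult_eq_compat_l (beta + 1)) in H.
    field_simplify in H; [lra | exact Hne].
  - apply (Rmult_eq_reg_l (beta + 1)); [|exact Hne].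
    field_simplify; [lra | exact Hne].
Qed.

Lemma bernoulli_unit (y : R) (n : nat) : 0 <= y <= 1 -> 1 - y ^ n <= INR n * (1 - y).
Proof.
  intros Hy. induction n as [|n IH]; [simpl; lra|].
  rewrite S_INR. simpl.
  assert (0 <= y ^ n <= 1).
  { split; [apply pow_le; lra|]. rewrite <- (pow1 n). apply pow_incr. lra. }
  nra.
Qed.

Lemma root_poly_pos beta y p : 0 < beta -> INR p <= beta -> 0 <= y < 1 ->
  0 < y ^ (p + 1) - (beta + 1) * y + beta.
Proof.
  intros Hb Hp Hy.
  pose proof (bernoulli_unit y p ltac:(lra)).
  rewrite pow_add, pow_1.
  assert (y * (1 - y ^ p) <= y * (INR p * (1 - y))) by (apply Rmult_le_compat_l; lra).
  assert (0 <= (beta - INR p) * y) by (apply Rmult_le_pos; lra).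
  assert (0 < beta * (1 - y)) by (apply Rmult_lt_0_compat; lra).
  nra.
Qed.

Theorem theorem1 (beta : R) (p : nat) (Hbeta : 0 < beta) :
  (exists phi0 : R,
      Phi_is beta p 0 phi0 /\
      smallest_pos_root beta p phi0 /\
      (forall d : nat, Phi_is beta p d (phi0 ^ (d + 1)))) /\
  (INR p <= beta -> forall d : nat, Phi_is beta p d 1).
Proof.
  assert (Ha : 0 < step_prob beta true) by (apply Rdiv_lt_0_compat; lra).
  assert (Hc : 0 <= step_prob beta false) by (apply Rlt_le, Rdiv_lt_0_compat; lra).
  assert (Hac : step_prob beta true + step_prob beta false = 1)
    by (unfold step_prob; field; lra).
  destruct (reach_limit_spec _ _ p (Rlt_le _ _ Ha) Hc Hac Ha)
    as [phi0 [Hpos [Hcv [Hfix Hleast]]]].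
  assert (HPhi : forall d, Phi_is beta p d (phi0 ^ (d + 1))).
  { intro d. rewrite Nat.add_1_r. eapply Un_cv_ext; [|apply Hcv].
    intro n. symmetry. apply PhiN_reach, Hbeta. }
  assert (Hroot : smallest_pos_root beta p phi0).
  { split; [exact Hpos | split].
    - apply fixpoint_iff_root; assumption.
    - intros z Hz Hzroot. apply Hleast; [lra|].
      apply fixpoint_iff_root; assumption. }
  split.
  - exists phi0. split; [|split; assumption].
    pose proof (HPhi 0%nat) as H0. rewrite pow_1 in H0. exact H0.
  - intros Hp d.
    assert (Hone : phi0 = 1).
    { destruct Hroot as [_ [Hr Hmin]].
      apply Rle_antisym.
      - apply Hmin; [lra | rewrite pow1; ring].
      - destruct (Rlt_le_dec phi0 1) as [Hlt|]; [|assumption].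
        pose proof (root_poly_pos beta phi0 p Hbeta Hp ltac:(lra)). lra. }
    pose proof (HPhi d) as Hd. rewrite Hone, pow1 in Hd. exact Hd.
Qed.
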